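(* Let $\Lambda$ be a normal subshift and $\mathfrak L_\Lambda^{\min}$ its minimal presentation. Then $\mathfrak L_\Lambda^{\min}$ satisfies condition (I).
   Context: Subshifts over a finite alphabet $\Sigma$: $B_l(\Lambda)$, $B_*(\Lambda)$ admissible words; $X_\Lambda$ the right one-sided subshift. $\Gamma_l^-(\mu)=\{\nu\in B_l(\Lambda):\nu\mu\in B_*(\Lambda)\}$, $\Gamma_*^+(\mu)=\{\nu:\mu\nu\in B_*(\Lambda)\}$; $\mu$ is $l$-synchronizing if $\Gamma_l^-(\mu)=\Gamma_l^-(\mu\omega)$ for all $\omega\in\Gamma_*^+(\mu)$, $S_l(\Lambda)$ the set of these; $\mu\sim_l\nu$ iff $\Gamma_l^-(\mu)=\Gamma_l^-(\nu)$. $\Lambda$ is normal if irreducible, infinite as a set, and for every $\eta\in B_l(\Lambda)$ and $k>l$ there is $\nu\in S_k(\Lambda)$ with $\eta\nu\in S_{k-l}(\Lambda)$. The minimal presentation $\mathfrak L_\Lambda^{\min}$ is the labeled Bratteli-type diagram with vertex sets $V_0$ a singleton and $V_l=S_l(\Lambda)/\!\sim_l$ for $l\ge1$, an edge labeled $\alpha$ from $[\alpha\nu]_l$ to $[\nu]_{l+1}$ for every $\nu\in S_{l+1}(\Lambda)$ and $\alpha\in\Sigma$ with $\alpha\nu\in B_*(\Lambda)$, and maps $\iota([\nu]_{l+1})=[\nu]_l$. For a vertex $v\in V_l$, $\Gamma^+_\infty(v)$ is the set of label sequences $(\lambda(e_1),\lambda(e_2),\dots)$ of infinite paths with $s(e_1)=v$,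 $e_i$ an edge from level $l+i-1$ to level $l+i$ and $t(e_i)=s(e_{i+1})$. The system satisfies condition (I) if $\Gamma^+_\infty(v)$ contains at least two distinct sequences for every vertex $v$. *)

From mathcomp Require Import all_boot all_order all_algebra.
Set Implicit Arguments. Unset Strict Implicit. Unset Printing Implicit Defensive.
Import GRing.Theory Num.Theory.

Section Subshift.
Variable Sigma : finType.

Definition config := int -> Sigma.
Definition shift (x : config) : config := fun i => x (i + 1)%R.

(* two-sided subshift: closed (product topology) and shift invariant *)
Definition is_subshift (Lam : config -> Prop) : Prop :=
  (forall x, Lam x -> Lam (shift x)) /\
  (forall y, Lam y -> exists x, Lam x /\ shift x = y) /\
  (forall x : config,
     (forall n : nat, exists y, Lam y /\
        forall i : int, (- n%:Z <= i <= n%:Z)%R -> y i = x i) -> Lam x).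

Fixpoint occurs_at (x : config) (i : int) (w : seq Sigma) : Prop :=
  match w with
  | [::] => True
  | a :: w' => x i = a /\ occurs_at x (i + 1)%R w'
  end.

Definition admissible (Lam : config -> Prop) (w : seq Sigma) : Prop :=
  exists x, Lam x /\ exists i, occurs_at x i w.

Definition Bl (Lam : config -> Prop) (l : nat) (w : seq Sigma) : Prop :=
  size w = l /\ admissible Lam w.

Definition Gamma_minus (Lam : config -> Prop) (l : nat) (mu nu : seq Sigma) : Prop :=
  Bl Lam l nu /\ admissible Lam (nu ++ mu).

Definition Gamma_plus (Lam : config -> Prop) (mu nu : seq Sigma) : Prop :=
  admissible Lam (mu ++ nu).

Definition lequiv (Lam : config -> Prop) (l : nat) (mu nu : seq Sigma) : Prop :=
  forall eta, Gamma_minus Lam l mu eta <-> Gamma_minus Lam l nu eta.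

Definition S_l (Lam : config -> Prop) (l : nat) (mu : seq Sigma) : Prop :=
  admissible Lam mu /\
  forall omega, Gamma_plus Lam mu omega -> lequiv Lam l mu (mu ++ omega).

Definition irreducible (Lam : config -> Prop) : Prop :=
  forall mu nu, admissible Lam mu -> admissible Lam nu ->
    exists omega, admissible Lam (mu ++ omega ++ nu).

Definition infinite_set (Lam : config -> Prop) : Prop :=
  ~ exists s : seq config, forall x, Lam x -> exists2 k, k < size s & x = nth x s k.

Definition normal (Lam : config -> Prop) : Prop :=
  [/\ irreducible Lam, infinite_set Lam &
    forall (l : nat) (eta : seq Sigma) (k : nat), Bl Lam l eta -> l < k ->
      exists nu, S_l Lam k nu /\ S_l Lam (k - l) (eta ++ nu)].

(* Minimal presentation.  A vertex of V_l is represented by a word: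
   V_0 = {[::]} (singleton), and for l >= 1 the class [mu]_l of mu in S_l. *)
Definition vertex_rep (Lam : config -> Prop) (l : nat) (mu : seq Sigma) : Prop :=
  if l is 0 then mu = [::] else S_l Lam l mu.

Definition same_vertex (Lam : config -> Prop) (l : nat) (mu nu : seq Sigma) : Prop :=
  if l is 0 then True else lequiv Lam l mu nu.

(* There is an edge labeled a from the vertex represented by mu (level l)
   to the vertex represented by nu' (level l+1): i.e. there is nu in S_{l+1}
   with a nu admissible, [a nu]_l = [mu]_l and [nu]_{l+1} = [nu']_{l+1}. *)
Definition edge (Lam : config -> Prop) (l : nat) (mu : seq Sigma) (a : Sigma)
    (nu' : seq Sigma) : Prop :=
  exists nu, [/\ S_l Lam l.+1 nu, admissible Lam (a :: nu),
    same_vertex Lam l (a :: nu) mu & same_vertex Lam l.+1 nu nu'].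

Definition Gamma_inf (Lam : config -> Prop) (l : nat) (mu : seq Sigma)
    (alpha : nat -> Sigma) : Prop :=
  exists w : nat -> seq Sigma,
    w 0%N = mu /\
    forall i : nat, vertex_rep Lam (l + i).+1 (w i.+1) /\
                    edge Lam (l + i) (w i) (alpha i) (w i.+1).

Definition condition_I (Lam : config -> Prop) : Prop :=
  forall (l : nat) (mu : seq Sigma), vertex_rep Lam l mu ->
    exists alpha beta, [/\ Gamma_inf Lam l mu alpha, Gamma_inf Lam l mu beta &
                           exists n, alpha n <> beta n].

End Subshift.

(** If all admissible extensions of a nonempty word [mu] were determined by
    their length, then, [mu] recurring by irreducibility, the letters after
    any occurrence of [mu] would form a single periodic sequence, and every
    point of the subshift, preceded by [mu] on each finite window, would be
    one of finitely many periodic points.  Hence in an infinite irreducible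
    subshift every nonempty admissible word has two distinct extensions of
    the same length.  By normality each of them, followed by a suitable
    synchronizing word, is read by a path of the minimal presentation from
    the given vertex, and normality also lets such a path be continued
    forever; the two paths carry different labels. *)
From mathcomp Require Import all_boot all_order all_algebra.
From mathcomp Require Import zify ring.
From Stdlib Require Import Classical ClassicalEpsilon FunctionalExtensionality.
Set Implicit Arguments. Unset Strict Implicit. Unset Printing Implicit Defensive.
Import GRing.Theory Num.Theory.

Section MinimalPresentation.
Variable Sigma : finType.
Implicit Types (x : config Sigma) (u v w : seq Sigma).

Lemma occurs_cat x u v i :
  occurs_at x i (u ++ v) <-> occurs_at x i u /\ occurs_at x (i + (size u)%:Z)%R v.
Proof.
elim: u i => [|a u IH] i /=; first by rewrite addr0; tauto.
rewrite IH; have -> : (i + 1 + (size u)%:Z = i + (size u).+1%:Z)%R by lia.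
tauto.
Qed.

Lemma occurs_nth x w i d j :
  occurs_at x i w -> j < size w -> x (i + j%:Z)%R = nth d w j.
Proof.
elim: w i j => [|a w IH] i [|j] //=; first by rewrite addr0 => -[].
by move=> [_ /IH Hw] /Hw <-; rewrite intS addrA.
Qed.

Fixpoint window x (i : int) (n : nat) : seq Sigma :=
  if n is n'.+1 then x i :: window x (i + 1)%R n' else [::].

Lemma occurs_window x i n : occurs_at x i (window x i n).
Proof. by elim: n i => [|n IH] i //=. Qed.

Lemma size_window x i n : size (window x i n) = n.
Proof. by elim: n i => [|n IH] i //=; rewrite IH. Qed.

Lemma nth_window x i n j d : j < n -> nth d (window x i n) j = x (i + j%:Z)%R.
Proof. by move=> Hj; rewrite -(occurs_nth d (occurs_window x i n)) ?size_window. Qed.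

Lemma bounded_witnesses (P : nat -> int -> Prop) p :
  (forall k, k < p -> exists i, P k i) ->
  exists N, forall k, k < p -> exists i, (absz i <= N)%N /\ P k i.
Proof.
elim: p => [|p IH] HP; first by exists 0.
have [N HN] := IH (fun k Hk => HP k (ltnW Hk)).
have [i0 Hi0] := HP p (ltnSn p).
exists (maxn N (absz i0)) => k; rewrite ltnS leq_eqVlt => /orP[/eqP->|Hk].
  by exists i0; rewrite leq_maxr.
by have [i [Hi HPi]] := HN k Hk; exists i; rewrite leq_max Hi.
Qed.

Variable Lam : config Sigma -> Prop.

Lemma not_infinite_of_local_cover (c : nat -> config Sigma) p :
  (forall x, Lam x -> forall N : nat,
     exists2 k, k < p & forall i : int, (absz i <= N)%N -> x i = c k i) ->
  ~ infinite_set Lam.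
Proof.
move=> Hcover; apply; exists (mkseq c p) => x Hx; apply: NNPP => Hx_notin.
have Hdiff k : k < p -> exists i, x i <> c k i.
  move=> Hk; apply: NNPP => Hagree; apply: Hx_notin.
  exists k; first by rewrite size_mkseq.
  rewrite nth_mkseq //; apply: functional_extensionality => i.
  by apply: NNPP => Hi; apply: Hagree; exists i.
have [N HN] := bounded_witnesses Hdiff.
have [k Hk Hc] := Hcover x Hx N.
by have [i [Hi []]] := HN k Hk; apply: Hc.
Qed.

Lemma infinite_set_nonempty : infinite_set Lam -> exists x, Lam x.
Proof.
move=> Hinf; apply: NNPP => Hempty; apply: Hinf.
by exists [::] => x Hx; case: Hempty; exists x.
Qed.

Lemma admissible_nil : infinite_set Lam -> admissible Lam [::].
Proof. by move=> /infinite_set_nonempty[x Hx]; exists x; split=> //; exists 0%R. Qed.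

Lemma admissible_catl u v : admissible Lam (u ++ v) -> admissible Lam u.
Proof. by move=> [x [Hx [i /occurs_cat[Hu _]]]]; exists x; split=> //; exists i. Qed.

Lemma admissible_catr u v : admissible Lam (u ++ v) -> admissible Lam v.
Proof. by move=> [x [Hx [i /occurs_cat[_ Hv]]]]; exists x; split=> //; eexists; exact: Hv. Qed.

Lemma admissible_extend_left w : admissible Lam w -> exists a, admissible Lam (a :: w).
Proof.
move=> [x [Hx [i Hw]]]; exists (x (i - 1)%R), x; split=> //.
by exists (i - 1)%R => /=; rewrite subrK.
Qed.

Lemma admissible_extend_right w : admissible Lam w -> exists a, admissible Lam (w ++ [:: a]).
Proof.
move=> [x [Hx [i Hw]]]; exists (x (i + (size w)%:Z)%R), x; split=> //.
by exists i; apply/occurs_cat.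
Qed.

Lemma lequiv_sym l u v : lequiv Lam l u v -> lequiv Lam l v u.
Proof. by move=> Huv eta; rewrite Huv. Qed.

Lemma S_l_lequiv_cat l u v : S_l Lam l u -> admissible Lam (u ++ v) -> lequiv Lam l u (u ++ v).
Proof. by move=> [_ Hsync] /Hsync. Qed.

Lemma Gamma_minus_succ k mu eta :
  Gamma_minus Lam k mu eta <-> exists a, Gamma_minus Lam k.+1 mu (a :: eta).
Proof.
split=> [[[Heta _] Hadm] | [a [[[Heta] /(admissible_catr (u := [:: a])) Heta'] Hadm]]].
- have [a Ha] := admissible_extend_left Hadm.
  by exists a; split=> //; split; [rewrite /= Heta | exact: (admissible_catl (u := a :: eta) Ha)].
- by split=> //; exact: (admissible_catr (u := [:: a])) Hadm.
Qed.

Lemma Gamma_minus_catl k rho nu eta :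
  Gamma_minus Lam k (rho ++ nu) eta <-> Gamma_minus Lam (size rho + k) nu (eta ++ rho).
Proof.
rewrite /Gamma_minus /Bl size_cat addnC -catA.
split=> [[[-> _] Hadm] | [[/addnI Heta _] Hadm]]; do !split=> //.
- by move: Hadm; rewrite catA => /admissible_catl.
- by move: Hadm; rewrite catA => /admissible_catl/admissible_catl.
Qed.

Lemma S_l_catl k rho nu :
  S_l Lam (size rho + k) nu -> admissible Lam (rho ++ nu) -> S_l Lam k (rho ++ nu).
Proof.
move=> [_ Hsync] Hadm; split=> // om; rewrite /Gamma_plus -catA => Hom eta.
rewrite (Gamma_minus_catl k rho nu) (Gamma_minus_catl k rho (nu ++ om)).
by apply: Hsync; exact: admissible_catr Hom.
Qed.

Lemma S_l_succ k tau : S_l Lam k.+1 tau -> S_l Lam k tau.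
Proof.
move=> [Htau Hsync]; split=> // om Hom eta; rewrite !Gamma_minus_succ.
by split=> -[a /(Hsync om Hom)]; exists a.
Qed.

Lemma vertex_rep_admissible l mu :
  infinite_set Lam -> vertex_rep Lam l mu -> admissible Lam mu.
Proof. by case: l => [|l] Hinf /= Hmu; [rewrite Hmu; exact: admissible_nil | case: Hmu]. Qed.

Lemma Gamma_inf_cons l mu a nu beta :
  edge Lam l mu a nu -> vertex_rep Lam l.+1 nu -> Gamma_inf Lam l.+1 nu beta ->
  Gamma_inf Lam l mu (fun i => if i is j.+1 then beta j else a).
Proof.
move=> Hedge Hnu [w [w0 Hw]].
exists (fun i => if i is j.+1 then w j else mu); split=> // -[|j].
  by rewrite addn0 w0.
by rewrite addnS -addSn; exact: Hw.
Qed.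

Lemma edge_of_synchronizing l mu a s tau :
  S_l Lam (size s + l.+1) tau -> admissible Lam (a :: s ++ tau) ->
  same_vertex Lam l (a :: s ++ tau) mu ->
  edge Lam l mu a (s ++ tau) /\ vertex_rep Lam l.+1 (s ++ tau).
Proof.
move=> Htau Hadm Hsame.
have Hs : S_l Lam l.+1 (s ++ tau).
  exact: S_l_catl Htau (admissible_catr (u := [:: a]) Hadm).
by split=> //; exists (s ++ tau).
Qed.

Lemma synchronizing_completion l mu om :
  normal Lam -> vertex_rep Lam l mu -> admissible Lam (mu ++ om) ->
  exists tau, [/\ admissible Lam ((mu ++ om) ++ tau),
                  S_l Lam (size (mu ++ om) + l) tau &
                  same_vertex Lam l ((mu ++ om) ++ tau) mu].
Proof.
move=> [_ _ Hnormal] Hmu Hadm.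
have Hlt : size (mu ++ om) < (size (mu ++ om) + l).+1 by rewrite ltnS leq_addr.
have [tau [/S_l_succ Htau [Hadm' _]]] := Hnormal _ _ _ (conj erefl Hadm) Hlt.
exists tau; split=> //; case: l Hmu {Hlt Htau} => [|l] //= Hmu.
by apply: lequiv_sym; rewrite -catA; apply: S_l_lequiv_cat; rewrite ?catA.
Qed.

Lemma vertex_successor l mu :
  normal Lam -> vertex_rep Lam l mu ->
  exists a nu, edge Lam l mu a nu /\ vertex_rep Lam l.+1 nu.
Proof.
move=> Hnormal Hmu; have [_ Hinf _] := Hnormal.
have [c Hc] := admissible_extend_right (vertex_rep_admissible Hinf Hmu).
have [tau [Hadm Htau Hsame]] := synchronizing_completion Hnormal Hmu Hc.
case E: (mu ++ [:: c]) Hadm Htau Hsame => [|a s]; first by case: (mu) E.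
by rewrite addSnnS => *; exists a, (s ++ tau); apply: edge_of_synchronizing.
Qed.

Lemma Gamma_inf_exists l mu :
  normal Lam -> vertex_rep Lam l mu -> exists alpha, Gamma_inf Lam l mu alpha.
Proof.
move=> Hnormal Hmu.
have [a0 [nu0 _]] := vertex_successor Hnormal Hmu.
have Hstep (kw : nat * seq Sigma) : exists q : Sigma * seq Sigma,
    vertex_rep Lam kw.1 kw.2 -> edge Lam kw.1 kw.2 q.1 q.2 /\ vertex_rep Lam kw.1.+1 q.2.
  case: (classic (vertex_rep Lam kw.1 kw.2)) => [Hkw | Hnot]; last by exists (a0, nu0) => /Hnot.
  by have [a [nu Hnu]] := vertex_successor Hnormal Hkw; exists (a, nu).
have [next Hnext] := choice _ Hstep.
pose w := fix w i := if i is j.+1 then (next (l + j, w j)).2 else mu.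
have Hw i : vertex_rep Lam (l + i) (w i).
  by elim: i => [|i IH]; [rewrite addn0 | rewrite addnS; case: (Hnext (l + i, w i) IH)].
exists (fun i => (next (l + i, w i)).1), w; split=> // i.
by case: (Hnext (l + i, w i) (Hw i)).
Qed.

Lemma Gamma_inf_prefix d sigma l mu tau :
  normal Lam -> vertex_rep Lam l mu -> admissible Lam (sigma ++ tau) ->
  S_l Lam (size sigma + l) tau -> same_vertex Lam l (sigma ++ tau) mu ->
  exists alpha, Gamma_inf Lam l mu alpha /\
                forall j, j < size sigma -> alpha j = nth d sigma j.
Proof.
move=> Hnormal; elim: sigma l mu => [|a s IH] l mu Hmu Hadm Htau Hsame.
  by have [alpha Halpha] := Gamma_inf_exists Hnormal Hmu; exists alpha.
rewrite /= addSnnS in Htau.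
have [Hedge Hs] := edge_of_synchronizing Htau Hadm Hsame.
have [beta [Hbeta Hprefix]] := IH l.+1 (s ++ tau) Hs
  (admissible_catr (u := [:: a]) Hadm) Htau (fun eta => iff_refl _).
exists (fun i => if i is j.+1 then beta j else a); split.
  exact: Gamma_inf_cons Hedge Hs Hbeta.
by case=> [|j] //= /Hprefix.
Qed.

Lemma Gamma_inf_extension d l mu om :
  normal Lam -> vertex_rep Lam l mu -> admissible Lam (mu ++ om) ->
  exists alpha, Gamma_inf Lam l mu alpha /\
                forall j, j < size (mu ++ om) -> alpha j = nth d (mu ++ om) j.
Proof.
move=> Hnormal Hmu Hom.
have [tau [Hadm Htau Hsame]] := synchronizing_completion Hnormal Hmu Hom.
exact: Gamma_inf_prefix Hnormal Hmu Hadm Htau Hsame.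
Qed.

Section UniqueExtensions.
Variable mu : seq Sigma.
Hypothesis unique_extension : forall o1 o2, size o1 = size o2 ->
  admissible Lam (mu ++ o1) -> admissible Lam (mu ++ o2) -> o1 = o2.

Lemma continuation_eq x x' i i' j :
  Lam x -> Lam x' -> occurs_at x i mu -> occurs_at x' i' mu ->
  x (i + (size mu)%:Z + j%:Z)%R = x' (i' + (size mu)%:Z + j%:Z)%R.
Proof.
move=> Hx Hx' Hi Hi'.
have Hadm z k : Lam z -> occurs_at z k mu ->
    admissible Lam (mu ++ window z (k + (size mu)%:Z)%R j.+1).
  move=> Hz Hk; exists z; split=> //; exists k.
  by apply/occurs_cat; split; [exact: Hk | exact: occurs_window].
have E : window x (i + (size mu)%:Z)%R j.+1 = window x' (i' + (size mu)%:Z)%R j.+1.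
  by apply: unique_extension; [rewrite !size_window | exact: Hadm | exact: Hadm].
by move: (congr1 (nth (x 0%R) ^~ j) E); rewrite !nth_window.
Qed.

Lemma continuation_periodic :
  irreducible Lam -> admissible Lam mu -> mu <> [::] ->
  exists p (y : nat -> Sigma), [/\ 0 < p, forall j, y (j %% p) = y j &
    forall x i j, Lam x -> occurs_at x i mu -> x (i + (size mu)%:Z + j%:Z)%R = y j].
Proof.
move=> Hirr Hmu Hne.
have [om [x1 [Hx1 [i1 /occurs_cat[Hm1 /occurs_cat[_ Hm2]]]]]] := Hirr mu mu Hmu Hmu.
pose p := size mu + size om; pose y j := x1 (i1 + (size mu)%:Z + j%:Z)%R.
have Hper j : y (j + p) = y j.
  rewrite /y (continuation_eq j Hx1 Hx1 Hm1 Hm2); congr x1; rewrite /p !PoszD; ring.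
have Hper_mul m j : y (j + m * p) = y j.
  by elim: m => [|m IH]; rewrite ?addn0 // mulSnr addnA Hper.
exists p, y; split=> [||x i j Hx Hi]; first by rewrite /p; case: (mu) Hne.
  by move=> j; rewrite {2}(divn_eq j p) addnC Hper_mul.
exact: continuation_eq Hx Hx1 Hi Hm1.
Qed.

Lemma unique_extensions_not_infinite :
  irreducible Lam -> admissible Lam mu -> mu <> [::] -> ~ infinite_set Lam.
Proof.
move=> Hirr Hmu Hne; have [p [y [Hp Hmod Hcont]]] := continuation_periodic Hirr Hmu Hne.
apply: (@not_infinite_of_local_cover (fun k i => y (absz ((k%:Z + i) %% p%:Z)%Z)) p).
move=> x Hx N.
have HW : admissible Lam (window x (- N%:Z)%R (N + N).+1).
  by exists x; split=> //; exists (- N%:Z)%R; exact: occurs_window.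
have [om [x2 [Hx2 [i2 /occurs_cat[Hm2 /occurs_cat[_ HW2]]]]]] := Hirr mu _ Hmu HW.
exists ((size om + N) %% p); first by rewrite ltn_mod.
move=> i Hi; pose j := absz (i + N%:Z)%R.
have Hj : (j%:Z = i + N%:Z)%R by rewrite /j; lia.
have Hj_lt : j < (N + N).+1 by rewrite /j; lia.
have -> : x i = y (size om + j).
  rewrite -(Hcont x2 i2 _ Hx2 Hm2) PoszD addrA (occurs_nth (x i) HW2) ?size_window //.
  by rewrite nth_window // Hj addrC addrK.
rewrite -Hmod -(modz_nat (size om + N) p) modzDml.
have -> : (((size om + N)%N)%:Z + i = ((size om + j)%N)%:Z)%R by rewrite !PoszD Hj; ring.
by rewrite modz_nat.
Qed.

End UniqueExtensions.

Lemma two_extensions mu :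
  irreducible Lam -> infinite_set Lam -> admissible Lam mu -> mu <> [::] ->
  exists o1 o2, [/\ size o1 = size o2, admissible Lam (mu ++ o1),
                    admissible Lam (mu ++ o2) & o1 <> o2].
Proof.
move=> Hirr Hinf Hmu Hne; apply: NNPP => Hnone.
apply: (unique_extensions_not_infinite (mu := mu)) => // o1 o2 Hsize H1 H2.
by apply: NNPP => Hneq; apply: Hnone; exists o1, o2.
Qed.

End MinimalPresentation.

Theorem proposition2p14 (Sigma : finType) (Lam : config Sigma -> Prop) :
  is_subshift Lam -> normal Lam -> condition_I Lam.
Proof.
move=> _ Hnormal l mu Hmu; have [Hirr Hinf _] := Hnormal.
have [c Hc] := admissible_extend_right (vertex_rep_admissible Hinf Hmu).
have Hc_nonempty : mu ++ [:: c] <> [::] by case: (mu).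
have [o1 [o2 [Hsize H1 H2 Hneq]]] := two_extensions Hirr Hinf Hc Hc_nonempty.
rewrite -!catA in H1 H2.
have [alpha [Halpha Hprefix1]] := Gamma_inf_extension c Hnormal Hmu H1.
have [beta [Hbeta Hprefix2]] := Gamma_inf_extension c Hnormal Hmu H2.
exists alpha, beta; split=> //; apply: NNPP => Hagree; apply: Hneq.
have Hsize' : size (mu ++ c :: o1) = size (mu ++ c :: o2) by rewrite !size_cat /= Hsize.
have : mu ++ c :: o1 = mu ++ c :: o2.
  apply: (eq_from_nth (x0 := c) Hsize') => j Hj.
  rewrite -Hprefix1 // -Hprefix2 -?Hsize' //.
  by apply: NNPP => Hj_ne; apply: Hagree; exists j.
by move/eqP; rewrite eqseq_cat // => /andP[_ /eqP[]].
Qed.
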